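(* Let $F:\mathbb{R}^d\to\mathbb{R}^d$ be $L$-Lipschitz, $G:\mathbb{R}^d\rightrightarrows\mathbb{R}^d$ maximally monotone, the solution set of $0\in F(x)+G(x)$ nonempty, and suppose $x^\star$ is a solution satisfying $\langle u,x-x^\star\rangle\ge-\rho\|u\|^2$ for all $(x,u)$ in the graph of $F+G$, with $\rho>0$. Let $\eta>\rho$, $\alpha=1-\frac\rho\eta$, $x_0\in\mathbb{R}^d$, and suppose $(x_k)$ satisfies $x_{k+1}=(1-\alpha)x_k+\alpha\widetilde J_k$ for $k\ge0$, where the points $\widetilde J_k$ satisfy $\|J_{\eta(F+G)}(x_k)-\widetilde J_k\|\le\varepsilon_k$ for some $\varepsilon_k>0$. Then for $K\ge1$, $$\sum_{k=0}^{K-1}\|(\mathrm{Id}-J_{\eta(F+G)})(x_k)\|^2-\frac{2\eta^2}{(\eta-\rho)^2}\|x_0-x^\star\|^2\le6\sum_{k=0}^{K-1}\varepsilon_k^2+\frac{4\eta}{\eta-\rho}\sum_{k=0}^{K-1}\|x_k-x^\star\|\varepsilon_k,$$ and $\|x_k-x^\star\|\le\|x_{k-1}-x^\star\|+\alpha\varepsilon_{k-1}$ for $k\ge1$.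
   Context: For an operator $A$, $J_A=(\mathrm{Id}+A)^{-1}$ is its resolvent. Here $\eta$ is additionally such that the resolvent $J_{\eta(F+G)}$ is evaluated at the iterates. *)

From HB Require Import structures.
From mathcomp Require Import all_boot all_order all_algebra.
From mathcomp Require Import reals.
Set Implicit Arguments. Unset Strict Implicit. Unset Printing Implicit Defensive.
Import Order.TTheory GRing.Theory Num.Theory.
Local Open Scope ring_scope.

Section Defs.
Variables (R : realType) (d : nat).
Notation vec := 'rV[R]_d.

Definition dotv (u v : vec) : R := \sum_(i < d) u 0 i * v 0 i.
Definition normv (u : vec) : R := Num.sqrt (dotv u u).

(* set-valued operators are represented by their graphs: A x u  <->  u \in A(x) *)
Definition setop := vec -> vec -> Prop.

Definition lipschitz (L : R) (F : vec -> vec) : Prop :=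
  forall x y, normv (F x - F y) <= L * normv (x - y).

Definition monotone_op (A : setop) : Prop :=
  forall x y u v, A x u -> A y v -> 0 <= dotv (u - v) (x - y).

Definition maximally_monotone (A : setop) : Prop :=
  monotone_op A /\
  forall x u, (forall y v, A y v -> 0 <= dotv (u - v) (x - y)) -> A x u.

Definition sum_op (F : vec -> vec) (G : setop) : setop :=
  fun x w => exists u, G x u /\ w = F x + u.

(* p \in J_{eta A}(x) = (Id + eta A)^{-1}(x)  <->  x \in p + eta A(p) *)
Definition resolvent_rel (eta : R) (A : setop) (x p : vec) : Prop :=
  exists u, A p u /\ x = p + eta *: u.

End Defs.

From HB Require Import structures.
From mathcomp Require Import all_boot all_order all_algebra.
From mathcomp Require Import reals.
From mathcomp Require Import ring lra.
Import Order.TTheory GRing.Theory Num.Theory.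
Set Implicit Arguments. Unset Strict Implicit.
Local Open Scope ring_scope.

(* Write x k = J k + eta u with u in A(J k). The exact relaxed step
   y k = (1 - alpha) x k + alpha J k equals J k + rho u, and expanding squares
   against the weak Minty inequality <u, J k - x*> >= -rho |u|^2 gives
     |y k - x*|^2 + alpha^2 |x k - J k|^2 <= |x k - x*|^2.
   The inexact step lies within alpha eps k of y k, which gives the second
   claim; squaring it, telescoping and dividing by alpha^2 gives the first. *)

Lemma ler_sum_telescope (R : realDomainType) (a b c : nat -> R) (K : nat) :
  (forall k, a k + b k.+1 <= b k + c k) ->
  \sum_(k < K) a k + b K <= b 0%N + \sum_(k < K) c k.
Proof.
move=> abc; elim: K => [|K IH]; first by rewrite !big_ord0 add0r addr0.
by rewrite !big_ord_recr /=; have := abc K; lra.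
Qed.

Section EuclideanSpace.
Variables (R : realType) (d : nat).
Implicit Types (u v w : 'rV[R]_d) (a : R).

Lemma dotvC u v : dotv u v = dotv v u.
Proof. by apply: eq_bigr => i _; rewrite mulrC. Qed.

Lemma dotvDl u v w : dotv (u + v) w = dotv u w + dotv v w.
Proof. by rewrite /dotv -big_split; apply: eq_bigr => i _; rewrite mxE mulrDl. Qed.

Lemma dotvZl a u v : dotv (a *: u) v = a * dotv u v.
Proof. by rewrite /dotv mulr_sumr; apply: eq_bigr => i _; rewrite mxE mulrA. Qed.

Lemma dotvZr a u v : dotv u (a *: v) = a * dotv u v.
Proof. by rewrite dotvC dotvZl dotvC. Qed.

Lemma dotvv_ge0 u : 0 <= dotv u u.
Proof. by apply: sumr_ge0 => i _; rewrite -expr2 sqr_ge0. Qed.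

Lemma dotvv_eq0 u : (dotv u u == 0) = (u == 0).
Proof.
apply/idP/eqP => [|->]; last by rewrite /dotv big1 // => i _; rewrite mxE mul0r.
rewrite /dotv psumr_eq0 => [/allP u0|i _]; last by rewrite -expr2 sqr_ge0.
apply/rowP => i; rewrite mxE.
by have /implyP/(_ isT) := u0 i (mem_index_enum _); rewrite mulf_eq0 orbb => /eqP.
Qed.

Lemma normv_ge0 u : 0 <= normv u.
Proof. exact: sqrtr_ge0. Qed.

Lemma normv_sq u : normv u ^+ 2 = dotv u u.
Proof. by rewrite sqr_sqrtr // dotvv_ge0. Qed.

Lemma normv_eq0 u : (normv u == 0) = (u == 0).
Proof. by rewrite sqrtr_eq0 le_eqVlt ltNge dotvv_ge0 orbF dotvv_eq0. Qed.

Lemma normvZ a u : normv (a *: u) = `|a| * normv u.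
Proof. by rewrite /normv dotvZl dotvZr mulrA -expr2 sqrtrM ?sqr_ge0 // sqrtr_sqr. Qed.

Lemma normvN u : normv (- u) = normv u.
Proof. by rewrite -scaleN1r normvZ normrN1 mul1r. Qed.

Lemma normvD_sq u v :
  normv (u + v) ^+ 2 = normv u ^+ 2 + 2 * dotv u v + normv v ^+ 2.
Proof. by rewrite !normv_sq !dotvDl ![dotv _ (u + v)]dotvC !dotvDl [dotv v u]dotvC; ring. Qed.

Lemma normvDZ_sq a u v :
  normv (u + a *: v) ^+ 2 = normv u ^+ 2 + 2 * a * dotv u v + a ^+ 2 * normv v ^+ 2.
Proof. by rewrite normvD_sq dotvZr normvZ exprMn real_normK ?num_real //; ring. Qed.

Lemma dotv_le_normv u v : dotv u v <= normv u * normv v.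
Proof.
have [->|u0] := eqVneq u 0.
  by rewrite /dotv big1 ?mulr_ge0 ?normv_ge0 // => i _; rewrite mxE mul0r.
have [->|v0] := eqVneq v 0.
  by rewrite /dotv big1 ?mulr_ge0 ?normv_ge0 // => i _; rewrite mxE mulr0.
have nuv : 0 < normv u * normv v.
  by rewrite mulr_gt0 // lt_def normv_eq0 ?u0 ?v0 normv_ge0.
have := sqr_ge0 (normv (normv v *: u + (- normv u) *: v)).
rewrite normvD_sq dotvZl dotvZr !normvZ normrN !ger0_norm ?normv_ge0 //.
nra.
Qed.

Lemma normvD_le u v : normv (u + v) <= normv u + normv v.
Proof.
rewrite -(@ler_pXn2r _ 2) ?nnegrE ?addr_ge0 ?normv_ge0 //.
by rewrite normvD_sq sqrrD; have := dotv_le_normv u v; lra.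
Qed.

Lemma weak_minty_descent rho eta u v :
  rho <= eta -> - rho * normv u ^+ 2 <= dotv u v ->
  normv (v + rho *: u) ^+ 2 + (eta - rho) ^+ 2 * normv u ^+ 2
    <= normv (v + eta *: u) ^+ 2.
Proof.
move=> rho_eta minty; rewrite !normvDZ_sq [dotv v u]dotvC.
have : 0 <= (eta - rho) * (dotv u v + rho * normv u ^+ 2) by apply: mulr_ge0; lra.
nra.
Qed.

End EuclideanSpace.

Section InexactRelaxedProximalPoint.
Variables (R : realType) (d : nat) (A : setop R d) (rho eta : R).
Variables (xstar : 'rV[R]_d) (x Jt J : nat -> 'rV[R]_d) (eps : nat -> R).
Hypothesis rho_ge0 : 0 <= rho.
Hypothesis rho_lt_eta : rho < eta.
Hypothesis weak_minty :
  forall y u, A y u -> dotv u (y - xstar) >= - rho * normv u ^+ 2.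
Hypothesis J_resolvent : forall k, resolvent_rel eta A (x k) (J k).
Hypothesis Jt_err : forall k, normv (J k - Jt k) <= eps k.

Local Notation alpha := (1 - rho / eta).
Local Notation exact_step k := ((1 - alpha) *: x k + alpha *: J k).

Hypothesis x_step : forall k, x k.+1 = (1 - alpha) *: x k + alpha *: Jt k.

Let eta_gt0 : 0 < eta. Proof. exact: le_lt_trans rho_ge0 rho_lt_eta. Qed.

Let alpha_ge0 : 0 <= alpha.
Proof. by rewrite subr_ge0 ler_pdivrMr // mul1r ltW. Qed.

Let eps_ge0 k : 0 <= eps k.
Proof. exact: le_trans (normv_ge0 _) (Jt_err k). Qed.

Lemma sqdist_exact_le k :
  normv (exact_step k - xstar) ^+ 2 + alpha ^+ 2 * normv (x k - J k) ^+ 2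
    <= normv (x k - xstar) ^+ 2.
Proof.
have eta_neq0 : eta != 0 by rewrite gt_eqF.
have [u [Au xk]] := J_resolvent k.
have -> : exact_step k - xstar = (J k - xstar) + rho *: u.
  by rewrite xk; apply/rowP => i; rewrite !mxE; field.
have -> : x k - xstar = (J k - xstar) + eta *: u.
  by rewrite xk; apply/rowP => i; rewrite !mxE; ring.
have -> : alpha ^+ 2 * normv (x k - J k) ^+ 2 = (eta - rho) ^+ 2 * normv u ^+ 2.
  by rewrite xk (addrC (J k)) addrK normvZ exprMn ger0_norm ?ltW //; field.
exact: weak_minty_descent (ltW rho_lt_eta) (weak_minty Au).
Qed.

Lemma dist_succ_le_exact k :
  normv (x k.+1 - xstar) <= normv (exact_step k - xstar) + alpha * eps k.
Proof.
have -> : x k.+1 - xstar = (exact_step k - xstar) + alpha *: (Jt k - J k).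
  by rewrite x_step; apply/rowP => i; rewrite !mxE; ring.
apply: le_trans (normvD_le _ _) _.
by rewrite lerD2l normvZ ger0_norm // -normvN opprB ler_wpM2l.
Qed.

Lemma dist_exact_le k : normv (exact_step k - xstar) <= normv (x k - xstar).
Proof.
rewrite -(@ler_pXn2r _ 2) ?nnegrE ?normv_ge0 //.
by have := sqdist_exact_le k; have := sqr_ge0 (alpha * normv (x k - J k)); rewrite exprMn; lra.
Qed.

Lemma dist_succ_le k :
  normv (x k.+1 - xstar) <= normv (x k - xstar) + alpha * eps k.
Proof. by apply: le_trans (dist_succ_le_exact k) _; rewrite lerD2r dist_exact_le. Qed.

Lemma sqdist_succ_le k :
  alpha ^+ 2 * normv (x k - J k) ^+ 2 + normv (x k.+1 - xstar) ^+ 2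
    <= normv (x k - xstar) ^+ 2
       + (2 * alpha * (normv (x k - xstar) * eps k) + alpha ^+ 2 * eps k ^+ 2).
Proof.
set m := normv (exact_step k - xstar); set n := normv (x k - xstar).
have : normv (x k.+1 - xstar) ^+ 2 <= (m + alpha * eps k) ^+ 2.
  by rewrite ler_pXn2r ?nnegrE ?normv_ge0 ?addr_ge0 ?mulr_ge0 ?normv_ge0 ?dist_succ_le_exact.
have : alpha * eps k * m <= alpha * eps k * n by rewrite ler_wpM2l ?mulr_ge0 ?dist_exact_le.
have := sqdist_exact_le k; rewrite sqrrD -/m -/n; lra.
Qed.

Lemma sum_sqresid_le K :
  \sum_(k < K) normv (x k - J k) ^+ 2
    <= eta ^+ 2 / (eta - rho) ^+ 2 * normv (x 0%N - xstar) ^+ 2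
       + 2 * eta / (eta - rho) * \sum_(k < K) normv (x k - xstar) * eps k
       + \sum_(k < K) eps k ^+ 2.
Proof.
have eta_neq0 : eta != 0 by rewrite gt_eqF.
have eta_rho_neq0 : eta - rho != 0 by rewrite subr_eq0 gt_eqF.
have := ler_sum_telescope (b := fun k => normv (x k - xstar) ^+ 2) K sqdist_succ_le.
rewrite -mulr_sumr big_split /= -!mulr_sumr.
set S := \sum_(k < K) _ ^+ 2; set N := \sum_(k < K) _ * _; set E := \sum_(k < K) _.
move=> /(ler_wpM2l (sqr_ge0 (eta / (eta - rho)))).
have -> : (eta / (eta - rho)) ^+ 2 * (alpha ^+ 2 * S + normv (x K - xstar) ^+ 2)
    = S + (eta / (eta - rho) * normv (x K - xstar)) ^+ 2 by field; rewrite ?eta_neq0 ?eta_rho_neq0.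
have -> : (eta / (eta - rho)) ^+ 2
      * (normv (x 0%N - xstar) ^+ 2 + (2 * alpha * N + alpha ^+ 2 * E))
    = eta ^+ 2 / (eta - rho) ^+ 2 * normv (x 0%N - xstar) ^+ 2
      + 2 * eta / (eta - rho) * N + E by field; rewrite ?eta_neq0 ?eta_rho_neq0.
by have := sqr_ge0 (eta / (eta - rho) * normv (x K - xstar)); lra.
Qed.
End InexactRelaxedProximalPoint.

Theorem lemma3p5 (R : realType) (d : nat) (F : 'rV[R]_d -> 'rV[R]_d)
  (G : 'rV[R]_d -> 'rV[R]_d -> Prop) (L rho eta : R) (xstar : 'rV[R]_d)
  (x Jt J : nat -> 'rV[R]_d) (eps : nat -> R) :
  lipschitz L F ->
  maximally_monotone G ->
  (exists z, sum_op F G z 0) ->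
  sum_op F G xstar 0 ->
  0 < rho ->
  (forall y u, sum_op F G y u -> dotv u (y - xstar) >= - rho * normv u ^+ 2) ->
  rho < eta ->
  (* J k = J_{eta(F+G)}(x k): the resolvent at the iterates is well defined *)
  (forall k, resolvent_rel eta (sum_op F G) (x k) (J k)) ->
  (forall k p, resolvent_rel eta (sum_op F G) (x k) p -> p = J k) ->
  (forall k, 0 < eps k) ->
  (forall k, normv (J k - Jt k) <= eps k) ->
  (forall k, x k.+1 = (1 - (1 - rho / eta)) *: x k + (1 - rho / eta) *: Jt k) ->
  (forall K : nat, (1 <= K)%N ->
     \sum_(k < K) normv (x k - J k) ^+ 2
       - 2 * eta ^+ 2 / (eta - rho) ^+ 2 * normv (x 0%N - xstar) ^+ 2
     <= 6 * \sum_(k < K) eps k ^+ 2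
        + 4 * eta / (eta - rho) * \sum_(k < K) normv (x k - xstar) * eps k)
  /\
  (forall k : nat, (1 <= k)%N ->
     normv (x k - xstar) <= normv (x k.-1 - xstar) + (1 - rho / eta) * eps k.-1).
Proof.
(* Only the weak Minty inequality at the points J k is used. *)
move=> _ _ _ _ rho_gt0 weak_minty rho_lt_eta J_res _ _ Jt_err x_step.
have rho_ge0 := ltW rho_gt0.
split=> [K _|[//|k] _].
  have := sum_sqresid_le rho_ge0 rho_lt_eta weak_minty J_res Jt_err x_step K.
  set N := \sum_(k < K) _ * _; set E := \sum_(k < K) eps k ^+ 2.
  have eps_ge0 k : 0 <= eps k := le_trans (normv_ge0 _) (Jt_err k).
  have N_ge0 : 0 <= N by apply: sumr_ge0 => k _; rewrite mulr_ge0 ?normv_ge0.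
  have : 0 <= E by apply: sumr_ge0 => k _; rewrite sqr_ge0.
  have eta_gt0 : 0 < eta := lt_trans rho_gt0 rho_lt_eta.
  have eta_rho_gt0 : 0 < eta - rho by rewrite subr_gt0.
  have := mulr_ge0 (divr_ge0 (ltW eta_gt0) (ltW eta_rho_gt0)) N_ge0.
  have : 0 <= eta ^+ 2 / (eta - rho) ^+ 2 * normv (x 0%N - xstar) ^+ 2.
    by rewrite mulr_ge0 ?divr_ge0 ?sqr_ge0.
  lra.
exact: dist_succ_le rho_ge0 rho_lt_eta weak_minty J_res Jt_err x_step k.
Qed.
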